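(* Let $L\subseteq Q$ be an extension of Lie algebras with $L$ semiprime, and suppose $Q$ is an algebra of quotients of $L$. Then $A(Q)$ is a left quotient algebra of $A_0$.
   Context: Algebras are over a commutative unital ring $\Phi$. For a Lie algebra $Q$, $\mathrm{ad}_x(y)=[x,y]$ and $A(Q)$ is the associative subalgebra of $\mathrm{End}_\Phi(Q)$ generated by all $\mathrm{ad}_x$, $x\in Q$. For a Lie subalgebra $L\subseteq Q$, $A_0=\{\mu\in A(Q):\mu(L)\subseteq L\}$. $\mathrm{Ann}_L(X)=\{a\in L:[a,X]=0\}$. $L$ is semiprime if $[I,I]\ne0$ for every nonzero ideal $I$ of $L$. $Q$ is an algebra of quotients of $L$ if for every nonzero $q\in Q$ there is an ideal $I$ of $L$ with $\mathrm{Ann}_L(I)=0$ and $0\neq[I,q]\subseteq L$. An associative algebra $S$ is a left quotient algebra of a subalgebra $A$ if for all $p,q\in S$ with $p\ne0$ there exists $x\in A$ with $xp\neq0$ and $xq\in A$. *)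

From HB Require Import structures.
From mathcomp Require Import all_boot all_order all_algebra.
Set Implicit Arguments. Unset Strict Implicit. Unset Printing Implicit Defensive.
Import GRing.Theory.
Local Open Scope ring_scope.

Section Lie.
Variables (R : comPzRingType) (Q : lmodType R).

Definition is_lie_bracket (br : Q -> Q -> Q) : Prop :=
  [/\ (forall (a : R) (x y z : Q), br (a *: x + y) z = a *: br x z + br y z),
      (forall (a : R) (x y z : Q), br z (a *: x + y) = a *: br z x + br z y),
      (forall x : Q, br x x = 0) &
      (forall x y z : Q, br x (br y z) + br y (br z x) + br z (br x y) = 0)].

Variable br : Q -> Q -> Q.

Definition ad (x : Q) : Q -> Q := fun y => br x y.

Definition submodule (L : Q -> Prop) : Prop :=
  [/\ L 0, (forall x y, L x -> L y -> L (x + y)) &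
      (forall (a : R) x, L x -> L (a *: x))].

Definition lie_subalgebra (L : Q -> Prop) : Prop :=
  submodule L /\ (forall x y, L x -> L y -> L (br x y)).

Definition lie_ideal (L I : Q -> Prop) : Prop :=
  [/\ submodule I, (forall x, I x -> L x) &
      (forall x y, L x -> I y -> I (br x y))].

Definition trivial_ann (L I : Q -> Prop) : Prop :=
  forall a, L a -> (forall b, I b -> br a b = 0) -> a = 0.

Definition semiprime (L : Q -> Prop) : Prop :=
  forall I, lie_ideal L I -> (exists x, I x /\ x <> 0) ->
    exists a b, [/\ I a, I b & br a b <> 0].

Definition algebra_of_quotients (L : Q -> Prop) : Prop :=
  forall q : Q, q <> 0 ->
    exists I, [/\ lie_ideal L I, trivial_ann L I,
                  (exists a, I a /\ br a q <> 0) &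
                  (forall a, I a -> L (br a q))].

(* A(Q): the associative subalgebra of End_R(Q) generated by the ad_x
   (non-unital; elements represented as functions Q -> Q). *)
Inductive inA : (Q -> Q) -> Prop :=
| inA_ad x : inA (ad x)
| inA_add f g : inA f -> inA g -> inA (fun q => f q + g q)
| inA_scale (a : R) f : inA f -> inA (fun q => a *: f q)
| inA_comp f g : inA f -> inA g -> inA (fun q => f (g q)).

Definition inA0 (L : Q -> Prop) (mu : Q -> Q) : Prop :=
  inA mu /\ (forall x, L x -> L (mu x)).

End Lie.

(* S is a left quotient algebra of its subalgebra A (inside End(Q),
   product = composition, zero = zero map). *)
Definition left_quotient_algebra (R : comPzRingType) (Q : lmodType R)
  (S A : (Q -> Q) -> Prop) : Prop :=
  forall p q, S p -> S q -> p <> (fun _ => 0) ->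
    exists x, [/\ A x, (fun y => x (p y)) <> (fun _ => 0) &
                   A (fun y => x (q y))].

(* Call an ideal of L essential if its annihilator in L is zero.  For every
   mu in A(Q) there are an essential ideal J0 and, for each ideal J inside J0,
   a bound n such that mu raises the "J-envelope degree" by n: if
   [J,[J,...,[J,v]]] (k brackets) lies in L, then so does the same expression
   for mu v with k + n brackets.  This goes by induction on mu: for ad_y one
   takes the denominator ideal {a : [a,y] in L}, and sums and composites are
   handled by intersecting, since in a semiprime algebra an intersection of
   essential ideals is essential.  Now let p <> 0, say p z <> 0, and q be given;
   take J0 and n for q.  An essential ideal cannot annihilate a nonzero element
   of Q, so a_0, ..., a_n in J0 can be chosen one after the other with
   ad_{a_n} ... ad_{a_0} (p z) <> 0.  Then x = ad_{a_n} ... ad_{a_0} lies in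
   A_0, x p <> 0, and x q maps L into L. *)
From mathcomp Require Import all_boot all_order all_algebra.
From Stdlib Require Import Classical FunctionalExtensionality.
Set Implicit Arguments. Unset Strict Implicit. Unset Printing Implicit Defensive.
Import GRing.Theory.
Local Open Scope ring_scope.

Section SubmoduleTheory.
Variables (R : comPzRingType) (Q : lmodType R) (P : Q -> Prop).
Hypothesis subP : submodule P.

Lemma submodule0 : P 0.
Proof. by case: subP. Qed.

Lemma submoduleD x y : P x -> P y -> P (x + y).
Proof. by case: subP => _ + _; apply. Qed.

Lemma submoduleZ a x : P x -> P (a *: x).
Proof. by case: subP => _ _; apply. Qed.

Lemma submoduleN x : P x -> P (- x).
Proof. by rewrite -scaleN1r; apply: submoduleZ. Qed.

End SubmoduleTheory.

Section LieQuotients.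
Variables (R : comPzRingType) (Q : lmodType R) (br : Q -> Q -> Q).
Hypothesis br_lie : is_lie_bracket br.

Lemma br0l z : br 0 z = 0.
Proof. by case: br_lie => H _ _ _; have := H (-1) z z z; rewrite !scaleN1r !addNr. Qed.

Lemma br0r z : br z 0 = 0.
Proof. by case: br_lie => _ H _ _; have := H (-1) z z z; rewrite !scaleN1r !addNr. Qed.

Lemma brDl x y z : br (x + y) z = br x z + br y z.
Proof. by case: br_lie => H _ _ _; have := H 1 x y z; rewrite !scale1r. Qed.

Lemma brDr x y z : br z (x + y) = br z x + br z y.
Proof. by case: br_lie => _ H _ _; have := H 1 x y z; rewrite !scale1r. Qed.

Lemma brZl a x z : br (a *: x) z = a *: br x z.
Proof. by case: br_lie => H _ _ _; have := H a x 0 z; rewrite !addr0 br0l addr0. Qed.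

Lemma brZr a x z : br z (a *: x) = a *: br z x.
Proof. by case: br_lie => _ H _ _; have := H a x 0 z; rewrite !addr0 br0r addr0. Qed.

Lemma brNr x z : br z (- x) = - br z x.
Proof. by rewrite -scaleN1r brZr scaleN1r. Qed.

Lemma br_skew x y : br x y = - br y x.
Proof.
case: br_lie => _ _ brxx _; apply/eqP; rewrite -addr_eq0.
by have := brxx (x + y); rewrite brDl !brDr !brxx add0r addr0 => ->.
Qed.

Lemma br_leibniz a y v : br a (br y v) = br (br a y) v + br y (br a v).
Proof.
case: br_lie => _ _ _ jacobi; have /eqP := jacobi a y v.
rewrite -addrA addr_eq0 => /eqP ->.
by rewrite opprD (br_skew v a) brNr opprK (br_skew v) opprK addrC.
Qed.

Variable L : Q -> Prop.
Hypothesis L_subalg : lie_subalgebra br L.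

Lemma L_submodule : submodule L. Proof. by case: L_subalg. Qed.

Lemma Lbr x y : L x -> L y -> L (br x y). Proof. by case: L_subalg => _; apply. Qed.

Section Ideals.
Variable I : Q -> Prop.
Hypothesis I_ideal : lie_ideal br L I.

Lemma lie_ideal_submodule : submodule I. Proof. by case: I_ideal. Qed.

Lemma lie_ideal_sub x : I x -> L x. Proof. by case: I_ideal => _ + _; apply. Qed.

Lemma lie_idealL x y : L x -> I y -> I (br x y). Proof. by case: I_ideal => _ _; apply. Qed.

Lemma lie_idealR x y : I x -> L y -> I (br x y).
Proof.
by move=> Ix Ly; rewrite br_skew; apply: (submoduleN lie_ideal_submodule); apply: lie_idealL.
Qed.

Lemma lie_idealI J : lie_ideal br L J -> lie_ideal br L (fun x => I x /\ J x).
Proof.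
move=> J_ideal; have Isub := lie_ideal_submodule; have Jsub : submodule J by case: J_ideal.
split; first split.
- by split; apply: submodule0.
- by move=> x y [Ix Jx] [Iy Jy]; split; apply: submoduleD.
- by move=> a x [Ix Jx]; split; apply: submoduleZ.
- by move=> x [/lie_ideal_sub].
- by case: J_ideal => _ _ JL x y Lx [Iy Jy]; split; [apply: lie_idealL | apply: JL].
Qed.

Definition lie_ann (x : Q) : Prop := L x /\ forall b, I b -> br x b = 0.

Lemma lie_ideal_ann : lie_ideal br L lie_ann.
Proof.
have Lsub := L_submodule.
split; first split.
- by split=> [|b _]; [apply: submodule0 | rewrite br0l].
- move=> x y [Lx xI] [Ly yI]; split; first exact: submoduleD.
  by move=> b Ib; rewrite brDl xI ?yI ?addr0.
- move=> a x [Lx xI]; split; first exact: submoduleZ.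
  by move=> b Ib; rewrite brZl xI ?scaler0.
- by move=> x [].
- move=> x y Lx [Ly yI]; split; first exact: Lbr.
  move=> b Ib; have := br_leibniz x y b.
  by rewrite (yI b) // (yI (br x b)) ?br0r ?addr0 //; apply: lie_idealL.
Qed.

End Ideals.

Definition essential_ideal (I : Q -> Prop) : Prop :=
  lie_ideal br L I /\ trivial_ann br L I.

Hypothesis L_semiprime : semiprime br L.

Lemma semiprime_abelian_ideal0 I x : lie_ideal br L I ->
  (forall a b, I a -> I b -> br a b = 0) -> I x -> x = 0.
Proof.
move=> I_ideal I_abelian Ix; apply: NNPP => x_neq0.
have [a [b [Ia Ib]]] := L_semiprime I_ideal (ex_intro _ x (conj Ix x_neq0)).
by apply; apply: I_abelian.
Qed.

Lemma semiprime_ideal_ann0 I x : lie_ideal br L I -> I x -> lie_ann I x -> x = 0.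
Proof.
move=> I_ideal Ix Ax.
apply: (semiprime_abelian_ideal0 (lie_idealI I_ideal (lie_ideal_ann I_ideal))) => //.
by move=> a b [_ [_ aI]] [Ib _]; apply: aI.
Qed.

Lemma essential_idealT : essential_ideal L.
Proof.
have L_ideal : lie_ideal br L L by split=> //; [apply: L_submodule | apply: Lbr].
by split=> // a La aL; apply: (semiprime_ideal_ann0 L_ideal).
Qed.

Lemma essential_idealI I J : essential_ideal I -> essential_ideal J ->
  essential_ideal (fun x => I x /\ J x).
Proof.
move=> [I_ideal I_ann] [J_ideal J_ann]; have IJ_ideal := lie_idealI I_ideal J_ideal.
have Ann_ideal := lie_ideal_ann IJ_ideal.
split=> // a La aIJ.
apply: I_ann => // i Ii; have Li := lie_ideal_sub I_ideal Ii.
apply: J_ann => [|j Jj]; first exact: Lbr.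
have Lj := lie_ideal_sub J_ideal Jj.
(* [[a, i], j] lies both in I /\ J and in its annihilator, hence vanishes. *)
apply: (semiprime_ideal_ann0 IJ_ideal).
- split; first by apply: lie_idealR => //; apply: lie_idealL.
  by apply: lie_idealL => //; apply: Lbr.
- by apply: (lie_idealR Ann_ideal) => //; apply: (lie_idealR Ann_ideal).
Qed.

Hypothesis Q_quotients : algebra_of_quotients br L.

Lemma denominator_ideal y :
  exists2 J, essential_ideal J & forall a, J a -> L (br a y).
Proof.
have [->|y_neq0] := classic (y = 0).
  by exists L => [|a _]; [apply: essential_idealT | rewrite br0r; case: L_submodule].
by have [I [I_ideal I_ann _ IyL]] := Q_quotients y_neq0; exists I.
Qed.

Lemma essential_ideal_br_neq0 J w : essential_ideal J -> w <> 0 ->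
  exists2 a, J a & br a w <> 0.
Proof.
move=> [J_ideal J_ann] w_neq0; apply: NNPP => Jw_neq0.
have Jw0 a : J a -> br a w = 0.
  by move=> Ja; apply: NNPP => ?; apply: Jw_neq0; exists a.
have [I [I_ideal _ [a [Ia aw_neq0]] IwL]] := Q_quotients w_neq0.
apply: aw_neq0; apply: J_ann => [|b Jb]; first exact: IwL.
have Jba : J (br b a) by apply: lie_idealR => //; apply: lie_ideal_sub Ia.
by rewrite br_skew br_leibniz Jw0 // Jw0 // br0r addr0 oppr0.
Qed.

Fixpoint envelope (J : Q -> Prop) (k : nat) (v : Q) : Prop :=
  if k is k'.+1 then forall a, J a -> envelope J k' (br a v) else L v.

Section Envelope.
Variable J : Q -> Prop.
Hypothesis J_ideal : lie_ideal br L J.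

Lemma envelopeD k x y : envelope J k x -> envelope J k y -> envelope J k (x + y).
Proof.
elim: k x y => [|k IHk] x y /=.
  by move=> Lx Ly; exact: (submoduleD L_submodule Lx Ly).
by move=> Ex Ey a Ja; rewrite brDr; apply: IHk; [apply: Ex | apply: Ey].
Qed.

Lemma envelopeZ k c x : envelope J k x -> envelope J k (c *: x).
Proof.
elim: k x => [|k IHk] x /=; first by move=> Lx; exact: (submoduleZ L_submodule c Lx).
by move=> Ex a Ja; rewrite brZr; apply/IHk/Ex.
Qed.

Lemma envelope_brL k b v : L b -> envelope J k v -> envelope J k (br b v).
Proof.
elim: k b v => [|k IHk] b v /=; first exact: Lbr.
move=> Lb Ev a Ja; rewrite br_leibniz; apply: envelopeD.
  by apply: Ev; apply: (lie_idealR J_ideal).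
by apply/IHk/Ev.
Qed.

Lemma envelopeS k v : envelope J k v -> envelope J k.+1 v.
Proof. by move=> Ev a Ja; apply: envelope_brL => //; apply: (lie_ideal_sub J_ideal). Qed.

Lemma envelope_le k m v : (k <= m)%N -> envelope J k v -> envelope J m v.
Proof.
move=> /subnKC <-; elim: (m - k)%N => [|n IHn]; rewrite ?addn0 ?addnS //.
by move=> /IHn/envelopeS.
Qed.

Lemma envelope_ad y k v : (forall a, J a -> L (br a y)) ->
  envelope J k v -> envelope J k.+1 (br y v).
Proof.
move=> JyL; elim: k v => [|k IHk] v Ev a Ja; rewrite br_leibniz.
- apply: (submoduleD L_submodule); first exact: Lbr (JyL _ Ja) Ev.
  rewrite br_skew; apply: (submoduleN L_submodule); apply: JyL.
  exact: (lie_idealR J_ideal Ja Ev).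
- apply: (envelopeD (k := k.+1)); first exact: envelope_brL (JyL _ Ja) Ev.
  by apply: IHk; apply: Ev.
Qed.

Definition raises (mu : Q -> Q) (n : nat) : Prop :=
  forall k v, envelope J k v -> envelope J (k + n) (mu v).

Lemma raises_ad y : (forall a, J a -> L (br a y)) -> raises (ad br y) 1.
Proof. by move=> JyL k v Ev; rewrite addn1; apply: envelope_ad. Qed.

Lemma raisesD f g m n : raises f m -> raises g n ->
  raises (fun v => f v + g v) (m + n).
Proof.
move=> Rf Rg k v Ev; apply: envelopeD.
  by apply: envelope_le (Rf _ _ Ev); rewrite leq_add2l leq_addr.
by apply: envelope_le (Rg _ _ Ev); rewrite leq_add2l leq_addl.
Qed.

Lemma raisesZ c f n : raises f n -> raises (fun v => c *: f v) n.
Proof. by move=> Rf k v Ev; apply/envelopeZ/Rf. Qed.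

Lemma raises_comp f g m n : raises f m -> raises g n ->
  raises (fun v => f (g v)) (n + m).
Proof. by move=> Rf Rg k v Ev; rewrite addnA; apply/Rf/Rg. Qed.

End Envelope.

Definition raises_under (J0 : Q -> Prop) (mu : Q -> Q) : Prop :=
  forall J, lie_ideal br L J -> (forall x, J x -> J0 x) -> exists n, raises J mu n.

Lemma raises_underI I J f g : raises_under I f -> raises_under J g ->
  forall K, lie_ideal br L K -> (forall x, K x -> I x /\ J x) ->
  exists m n, raises K f m /\ raises K g n.
Proof.
move=> Rf Rg K K_ideal KIJ.
have [m Rfm] := Rf K K_ideal (fun x Kx => (KIJ x Kx).1).
by have [n Rgn] := Rg K K_ideal (fun x Kx => (KIJ x Kx).2); exists m, n.
Qed.

Lemma inA_raises_under mu : inA br mu -> exists2 J0, essential_ideal J0 & raises_under J0 mu.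
Proof.
elim=> [y | f g _ [I EI Rf] _ [J EJ Rg] | c f _ [I EI Rf] | f g _ [I EI Rf] _ [J EJ Rg]].
- have [J0 EJ0 J0yL] := denominator_ideal y.
  by exists J0 => // J J_ideal JJ0; exists 1%N; apply: (raises_ad J_ideal) => a /JJ0/J0yL.
- exists (fun x => I x /\ J x); first exact: essential_idealI.
  move=> K K_ideal KIJ; have [m [n [Rfm Rgn]]] := raises_underI Rf Rg K_ideal KIJ.
  by exists (m + n)%N; apply: (raisesD K_ideal).
- by exists I => // K K_ideal KI; have [n Rfn] := Rf K K_ideal KI; exists n; apply: raisesZ.
- exists (fun x => I x /\ J x); first exact: essential_idealI.
  move=> K K_ideal KIJ; have [m [n [Rfm Rgn]]] := raises_underI Rf Rg K_ideal KIJ.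
  by exists (n + m)%N; apply: raises_comp.
Qed.

Lemma exists_inA0_envelope J m w : essential_ideal J -> w <> 0 ->
  exists x, [/\ inA0 br L x, x w <> 0 & forall v, envelope J m.+1 v -> L (x v)].
Proof.
move=> EJ; elim: m w => [|m IHm] w w_neq0;
  have [a Ja aw_neq0] := essential_ideal_br_neq0 EJ w_neq0;
  have La := lie_ideal_sub EJ.1 Ja.
- exists (ad br a); split=> [|//|v Ev]; last exact: Ev.
  by split=> [|v Lv]; [apply: inA_ad | apply: Lbr].
- have [x [[Ax xL] xw_neq0 xE]] := IHm _ aw_neq0.
  exists (fun v => x (ad br a v)); split=> [|//|v Ev]; last exact/xE/Ev.
  by split=> [|v Lv]; [apply/inA_comp/inA_ad | apply/xL/Lbr].
Qed.

End LieQuotients.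

Theorem mainTheorem2 (R : comPzRingType) (Q : lmodType R) (br : Q -> Q -> Q)
  (L : Q -> Prop) :
  is_lie_bracket br -> lie_subalgebra br L -> semiprime br L ->
  algebra_of_quotients br L ->
  left_quotient_algebra (inA br) (inA0 br L).
Proof.
move=> br_lie L_subalg L_semiprime Q_quotients p q Ap Aq p_neq0.
have [z pz_neq0] : exists z, p z <> 0.
  apply: NNPP => p0; apply: p_neq0; apply: functional_extensionality => z.
  by apply: NNPP => ?; apply: p0; exists z.
have [J EJ Rq] := inA_raises_under br_lie L_subalg L_semiprime Q_quotients Aq.
have [n qn] := Rq J EJ.1 (fun _ => id).
have [x [[Ax xL] xpz_neq0 xJ]] :=
  exists_inA0_envelope br_lie L_subalg Q_quotients n EJ pz_neq0.
exists x; split=> [//| xp0 | ].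
  by apply: xpz_neq0; rewrite (congr1 (@^~ z) xp0).
split=> [|v Lv]; first exact: inA_comp.
by apply/xJ/(envelopeS br_lie L_subalg EJ.1); apply: (qn 0%N).
Qed.
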